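(* Let $\varepsilon>0$ and let $\mathbb{F}$ be a field with $|\mathbb{F}|\ge n^2$. There exists a polynomial map $P : \mathbb{F}^{\lfloor 4 \varepsilon n^2\rfloor} \to \mathbb{F}^{n \times n}$, each of whose coordinates is a polynomial of degree at most $n^2$, such that every matrix $M\in\mathbb{F}^{n\times n}$ which is not $(\varepsilon n, \varepsilon n^2)$-rigid lies in the image of $P$.
   Context: A matrix $M\in\mathbb{F}^{n\times n}$ is $(r,s)$-rigid if $M$ cannot be written as $M=R+S$ with $\mathrm{rank}(R)\le r$ and $S$ having at most $s$ non-zero entries. *)

From HB Require Import structures.
From mathcomp Require Import all_boot all_order all_algebra.
From mathcomp Require Import reals.
From mathcomp Require Import mpoly.

Set Implicit Arguments.
Unset Strict Implicit.
Unset Printing Implicit Defensive.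

Import Order.TTheory GRing.Theory Num.Theory.
Local Open Scope ring_scope.

Definition nnz (F : fieldType) (m n : nat) (S : 'M[F]_(m, n)) : nat :=
  #|[set ij : 'I_m * 'I_n | S ij.1 ij.2 != 0]|.

Definition rigid (R : realType) (F : fieldType) (n : nat) (r s : R)
    (M : 'M[F]_n) : Prop :=
  ~ exists (L S : 'M[F]_n),
      [/\ M = L + S, (\rank L)%:R <= r & (nnz S)%:R <= s].

(* |F| >= k : F contains at least k distinct elements (F may be infinite). *)
Definition card_ge (F : fieldType) (k : nat) : Prop :=
  exists f : 'I_k -> F, injective f.

From HB Require Import structures.
From mathcomp Require Import all_boot all_order all_algebra.
From mathcomp Require Import reals.
From mathcomp Require Import mpoly.
From Stdlib Require Import Classical.
From mathcomp Require Import zify lra.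

Set Implicit Arguments.
Unset Strict Implicit.
Unset Printing Implicit Defensive.

(* A matrix that is not (eps n, eps n^2)-rigid is U W + S with U, W of sizes
   n x r and r x n (r = floor (eps n)) and S with at most s = floor (eps n^2)
   nonzero entries.  Take as variables the 2nr entries of U and W and, for
   each of the s possible nonzero entries of S, its value c_t and its
   position y_t, encoded injectively as an element of F.  This is at most
   4 eps n^2 variables, and M_ij = sum_b u_ib w_bj + sum_t c_t l_ij(y_t), where
   l_ij is the Lagrange basis polynomial of degree n^2 - 1 that is 1 at the
   code of (i, j) and 0 at the codes of the other positions. *)

Import Order.TTheory GRing.Theory Num.Theory.
Local Open Scope ring_scope.

Section EmbedVariables.
Variables (F : fieldType) (V : finType) (K : nat).
Hypothesis leVK : (#|V| <= K)%N.

Definition embed_var (v : V) : 'I_K := widen_ord leVK (enum_rank v).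

Definition embed_point (g : V -> F) (k : 'I_K) : F :=
  if [pick v | embed_var v == k] is Some v then g v else 0.

Lemma embed_var_inj : injective embed_var.
Proof. by move=> u v /(congr1 val) eq_uv; apply/enum_rank_inj/val_inj. Qed.

Lemma meval_embed_var g v : ('X_(embed_var v) : {mpoly F[K]}).@[embed_point g] = g v.
Proof.
rewrite mevalXU /embed_point; case: pickP => [u /eqP /embed_var_inj -> //|].
by move/(_ v); rewrite eqxx.
Qed.

End EmbedVariables.

Section MsizeBounds.
Context {F : idomainType} {K : nat}.
Implicit Types p q : {mpoly F[K]}.

Lemma msizeM_leq p q : (msize (p * q) <= (msize p + msize q).-1)%N.
Proof.
have [->|nz_p] := eqVneq p 0; first by rewrite mul0r msize0.
have [->|nz_q] := eqVneq q 0; first by rewrite mulr0 msize0.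
by rewrite msizeM.
Qed.

Lemma msize_prod_leq (I : Type) (r : seq I) (P : pred I) (G : I -> {mpoly F[K]}) :
  (msize (\prod_(i <- r | P i) G i) <= (\sum_(i <- r | P i) (msize (G i)).-1).+1)%N.
Proof.
elim/big_rec2: _ => [|i k p _ IH]; first by rewrite msize1.
by apply: leq_trans (msizeM_leq _ _) _; lia.
Qed.

Lemma msize_sum_leq (I : Type) (r : seq I) (P : pred I) (G : I -> {mpoly F[K]}) m :
  (forall i, P i -> msize (G i) <= m)%N -> (msize (\sum_(i <- r | P i) G i) <= m)%N.
Proof.
move=> leGm; elim/big_ind: _ => [|p q lepm leqm|//]; first by rewrite msize0.
by apply: leq_trans (msizeD_le p q) _; rewrite geq_max lepm.
Qed.

End MsizeBounds.

Section Lagrange.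
Variables (F : fieldType) (V : finType) (K : nat) (f : V -> F).
Hypothesis f_inj : injective f.

Definition lagrange (v : V) (y : {mpoly F[K]}) : {mpoly F[K]} :=
  (\prod_(u | u != v) (f v - f u)^-1) *: \prod_(u | u != v) (y - (f u)%:MP).

Lemma meval_lagrange (v u : V) (y : {mpoly F[K]}) x :
  y.@[x] = f u -> (lagrange v y).@[x] = (u == v)%:R.
Proof.
move=> yx; rewrite mevalZ rmorph_prod /=.
rewrite [X in _ * X](eq_bigr (fun w => f u - f w)); last first.
  by move=> w _; rewrite mevalB mevalC yx.
have [<-|neq_uv] := eqVneq u v.
  rewrite prodfV mulVf //; apply/prodf_neq0 => w neq_wu.
  by rewrite subr_eq0; apply: contra neq_wu => /eqP /f_inj ->.
by rewrite [X in _ * X](bigD1 u) //= subrr mul0r mulr0.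
Qed.

Lemma msize_lagrange (v : V) (y : {mpoly F[K]}) :
  (msize y <= 2)%N -> (msize (lagrange v y) <= #|V|)%N.
Proof.
move=> le_y2; apply: leq_trans (msizeZ_le _ _) _.
apply: leq_trans (msize_prod_leq _ _ _) _.
have le_factor w : (msize (y - (f w)%:MP) <= 2)%N.
  apply: leq_trans (msizeD_le _ _) _.
  by rewrite msizeN msizeC geq_max le_y2; case: (_ != 0).
apply: (@leq_trans (\sum_(w | w != v) 1)%N.+1).
  by rewrite ltnS; apply: leq_sum => w _; rewrite -subn1 leq_subLR; exact: le_factor.
by rewrite sum1_card cardC1 prednK //; apply/card_gt0P; exists v.
Qed.

End Lagrange.

Lemma card_ge_inj (F : fieldType) (V : finType) :
  card_ge F #|V| -> exists f : V -> F, injective f.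
Proof.
by case=> f f_inj; exists (f \o enum_rank) => u v /f_inj /enum_rank_inj.
Qed.

Lemma mxrank_factor (F : fieldType) (m n r : nat) (L : 'M[F]_(m, n)) :
  (\rank L <= r)%N -> exists (U : 'M_(m, r)) (W : 'M_(r, n)), L = U *m W.
Proof.
move=> leLr; exists (col_ebase L *m pid_mx (\rank L)).
exists (pid_mx (\rank L) *m row_ebase L).
by rewrite mulmxA -(mulmxA (col_ebase L)) pid_mx_id // mulmx_ebase.
Qed.

Lemma big_onth (T : Type) (V : nmodType) (e : seq T) (s : nat) (h : option T -> V) :
  h None = 0 -> (size e <= s)%N ->
  \sum_(t < s) h (onth e t) = \sum_(p <- e) h (Some p).
Proof.
move=> h0; rewrite -(big_mkord xpredT (fun t => h (onth e t))).
elim: e s => [|a e IH] s le_es; first by rewrite big_nil big1 // => -[].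
by case: s le_es => // s le_es; rewrite big_nat_recl // big_cons IH.
Qed.

Definition mxsupport (F : fieldType) (m n : nat) (S : 'M[F]_(m, n)) :=
  [set ij : 'I_m * 'I_n | S ij.1 ij.2 != 0].

Lemma mx_sum_support (F : fieldType) (m n : nat) (S : 'M[F]_(m, n)) i j :
  S i j = \sum_(p <- enum (mxsupport S)) S p.1 p.2 * (p == (i, j))%:R.
Proof.
rewrite big_enum /=; have [ij_S|] := boolP ((i, j) \in mxsupport S).
  rewrite (bigD1 (i, j)) //= eqxx mulr1 big1 ?addr0 // => p /andP[_ /negbTE->].
  by rewrite mulr0.
rewrite inE negbK => /eqP Sij; rewrite Sij big1 // => p _.
by case: eqP => [->|_]; rewrite ?Sij ?mul0r ?mulr0.
Qed.

Lemma mpoly_coordinates (F : fieldType) (n K : nat) : (n * n <= K)%N ->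
  exists P : 'I_n -> 'I_n -> {mpoly F[K]},
    (forall i j, msize (P i j) = 2%N) /\
    (forall M : 'M[F]_n, exists x, forall i j, M i j = (P i j).@[x]).
Proof.
move=> le_nK; have le_VK : (#|{: 'I_n * 'I_n}| <= K)%N by rewrite card_prod card_ord.
exists (fun i j => 'X_(embed_var le_VK (i, j))); split => [i j|M].
  by rewrite msizeX mdeg1.
by exists (embed_point le_VK (fun p => M p.1 p.2)) => i j; rewrite meval_embed_var.
Qed.

Definition lrs_var (n r s : nat) : finType :=
  ((('I_n * 'I_r) + ('I_r * 'I_n)) + ('I_s + 'I_s))%type.

Section LowRankPlusSparse.
Variables (F : fieldType) (n r s K : nat) (pos : 'I_n * 'I_n -> F).
Hypotheses (pos_inj : injective pos) (leVK : (#|lrs_var n r s| <= K)%N).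

Let X (v : lrs_var n r s) : {mpoly F[K]} := 'X_(embed_var leVK v).

(* Slot [t] of the sparse part has value [X (inr (inr t))] and position code
   [X (inr (inl t))]. *)
Definition lowrank_sparse_poly (i j : 'I_n) : {mpoly F[K]} :=
  \sum_(b < r) X (inl (inl (i, b))) * X (inl (inr (b, j)))
  + \sum_(t < s) X (inr (inr t)) * lagrange pos (i, j) (X (inr (inl t))).

Lemma msize_lowrank_sparse_poly i j :
  (r < n)%N -> (msize (lowrank_sparse_poly i j) <= (n * n).+1)%N.
Proof.
have msizeX1 v : msize (X v) = 2%N by rewrite msizeX mdeg1.
move=> lt_rn; apply: leq_trans (msizeD_le _ _) _; rewrite geq_max.
apply/andP; split; apply: msize_sum_leq => b _; apply: leq_trans (msizeM_leq _ _) _.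
  by rewrite !msizeX1; have := ltn_ord b; nia.
rewrite msizeX1 add2n ltnS (leq_trans (msize_lagrange _ _ _)) ?msizeX1 //.
by rewrite card_prod card_ord.
Qed.

Lemma lowrank_sparse_poly_surj (M L S : 'M[F]_n) :
  M = L + S -> (\rank L <= r)%N -> (nnz S <= s)%N ->
  exists x, forall i j, M i j = (lowrank_sparse_poly i j).@[x].
Proof.
move=> -> /mxrank_factor[U [W ->]] le_Ss.
pose e := enum (mxsupport S).
pose g (v : lrs_var n r s) : F :=
  match v with
  | inl (inl (a, b)) => U a b
  | inl (inr (b, c)) => W b c
  | inr (inl t) => if onth e t is Some p then pos p else 0
  | inr (inr t) => if onth e t is Some p then S p.1 p.2 else 0
  end.
exists (embed_point leVK g) => i j.
rewrite mevalD !rmorph_sum /= !mxE; congr (_ + _).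
  by apply: eq_bigr => b _; rewrite mevalM !meval_embed_var.
pose h o := if o is Some p then S p.1 p.2 * (p == (i, j))%:R else 0.
rewrite mx_sum_support -(big_onth (s := s) (h := h)) -?cardE //.
apply: eq_bigr => t _; rewrite mevalM meval_embed_var /= /h.
case e_t: (onth e t) => [p|]; last by rewrite mul0r.
by rewrite (@meval_lagrange _ _ _ _ pos_inj _ p) // meval_embed_var /= e_t.
Qed.

End LowRankPlusSparse.

Lemma nat_le_truncn (R : archiNumDomainType) (x : R) (k : nat) :
  k%:R <= x -> (k <= Num.truncn x)%N.
Proof. by move=> /le_truncn; rewrite natrK. Qed.

Lemma not_rigid_decomp (R : realType) (F : fieldType) (n : nat) (r s : R)
    (M : 'M[F]_n) :
  ~ rigid r s M -> exists L S : 'M[F]_n,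
    [/\ M = L + S, (\rank L <= Num.truncn r)%N & (nnz S <= Num.truncn s)%N].
Proof.
move=> /NNPP[L [S [defM rkL nnzS]]].
by exists L, S; split; rewrite ?nat_le_truncn.
Qed.

Section TruncatedBounds.
Variables (R : archiRealFieldType) (eps : R) (n : nat).
Hypothesis eps_gt0 : 0 < eps.

Lemma card_lrs_var_le :
  (#|lrs_var n (Num.truncn (eps * n%:R)) (Num.truncn (eps * n%:R ^+ 2))|
     <= Num.truncn (4 * eps * n%:R ^+ 2))%N.
Proof.
have n_ge0 : 0 <= n%:R :> R by [].
have r_le : (Num.truncn (eps * n%:R))%:R <= eps * n%:R.
  by rewrite truncn_le mulr_ge0 // ltW.
have s_le : (Num.truncn (eps * n%:R ^+ 2))%:R <= eps * n%:R ^+ 2.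
  by rewrite truncn_le mulr_ge0 ?exprn_ge0 // ltW.
rewrite !card_sum !card_prod !card_ord; apply: nat_le_truncn.
rewrite !natrD !natrM; nra.
Qed.

Lemma truncn_rank_lt :
  (0 < n)%N -> (Num.truncn (4 * eps * n%:R ^+ 2) < n * n)%N ->
  (Num.truncn (eps * n%:R) < n)%N.
Proof.
move=> n_gt0; have n_ge1 : 1 <= n%:R :> R by rewrite ler1n.
rewrite !truncn_lt_nat ?natrM ?mulr_ge0 ?exprn_ge0 ?ltW //; nra.
Qed.

End TruncatedBounds.

Theorem lemma2p2 (R : realType) (eps : R) (F : fieldType) (n : nat) :
  0 < eps -> card_ge F (n ^ 2)%N ->
  exists P : 'I_n -> 'I_n -> {mpoly F[Num.truncn (4 * eps * (n%:R) ^+ 2)]},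
    (forall i j, (msize (P i j) <= (n ^ 2).+1)%N) /\
    (forall M : 'M[F]_n,
       ~ rigid (eps * n%:R) (eps * (n%:R) ^+ 2) M ->
       exists x : 'I_(Num.truncn (4 * eps * (n%:R) ^+ 2)) -> F,
         forall i j, M i j = (P i j).@[x]).
Proof.
move=> eps_gt0 F_large; rewrite -mulnn.
have [pos pos_inj] : exists pos : 'I_n * 'I_n -> F, injective pos.
  by apply: card_ge_inj; rewrite card_prod card_ord mulnn.
(* With n^2 variables the entries themselves are coordinates; with fewer,
   4 eps < 1, so r < n and the degree-2 low-rank terms stay within n^2. *)
have [le_nK|lt_Kn] := leqP (n * n) (Num.truncn (4 * eps * n%:R ^+ 2)).
  have [P [msizeP P_surj]] := mpoly_coordinates F le_nK.
  exists P; split=> [i j|M _]; last exact: P_surj.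
  by rewrite msizeP; have := ltn_ord i; nia.
exists (lowrank_sparse_poly pos (card_lrs_var_le n eps_gt0)); split=> [i j|M].
  apply: msize_lowrank_sparse_poly.
  exact: truncn_rank_lt (leq_ltn_trans _ (ltn_ord i)) lt_Kn.
case/not_rigid_decomp => L [S [defM rkL nnzS]].
exact: lowrank_sparse_poly_surj defM rkL nnzS.
Qed.
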